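(* Let $f(x)=\kappa_1(x)_++\kappa_2(x)_-$ with $\kappa_2>\kappa_1>0$, where $(x)_+=\max(0,x)$ and $(x)_-=\min(0,x)$. For $d_t>0$, a state $s$, a scaled stock $c\in\mathbb{R}$, and a random future return $G_t(s,c)$ (integrable), define $V_t(s,c)\doteq\frac{1}{d_t}\Big(f^{-1}\big(\mathbb{E}[f(d_tc+d_tG_t(s,c))]\big)-d_tc\Big)$, and let $\Lambda=\frac{\kappa_2-\kappa_1}{\kappa_1}>0$. Then $V_t(s,c)\ge\mathbb{E}[G_t(s,c)]-\Lambda\,\mathbb{E}\big[|(c+G_t(s,c))_-|\big]$.
   Context: $f^{-1}$ denotes the inverse of the strictly increasing bijection $f:\mathbb{R}\to\mathbb{R}$. *)

From HB Require Import structures.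
From mathcomp Require Import all_boot all_order all_algebra.
From mathcomp Require Import all_classical all_reals all_analysis.
Set Implicit Arguments. Unset Strict Implicit. Unset Printing Implicit Defensive.
Import Order.TTheory GRing.Theory Num.Theory.
Local Open Scope ring_scope.

Definition pospart {R : realType} (x : R) : R := Num.max 0 x.
Definition negpart {R : realType} (x : R) : R := Num.min 0 x.

Definition futil {R : realType} (k1 k2 : R) (x : R) : R :=
  k1 * pospart x + k2 * negpart x.

From HB Require Import structures.
From mathcomp Require Import all_boot all_order all_algebra.
From mathcomp Require Import ring lra.
From mathcomp Require Import all_classical all_reals all_analysis.
Set Implicit Arguments. Unset Strict Implicit. Unset Printing Implicit Defensive.
Import Order.TTheory GRing.Theory Num.Theory.
Local Open Scope ring_scope.

(* Since [(x)_- <= 0] and [k1 <= k2], the utility [f x = k1 x - (k2 - k1) |(x)_-|]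
   lies below the line [k1 x]; hence [y = f (f^-1 y) <= k1 f^-1 y].  As [f] is
   positively homogeneous and linear in [x] and [|(x)_-|], the expectation
   [E f(dt (c + G))] equals [dt (k1 E[c + G] - (k2 - k1) E|(c + G)_-|)], and
   dividing by [k1] gives the claimed lower bound on [V]. *)

Section futil.
Variable R : realType.
Implicit Types a x y : R.

Lemma pospartE x : pospart x = (x + `|x|) / 2.
Proof. by rewrite /pospart maxr_absE sub0r normrN add0r. Qed.

Lemma negpartE x : negpart x = (x - `|x|) / 2.
Proof. by rewrite /negpart minr_absE sub0r normrN add0r. Qed.

Lemma normr_negpart x : `|negpart x| = (`|x| - x) / 2.
Proof.
rewrite negpartE ler0_norm; first by field.
by rewrite pmulr_lle0 ?invr_gt0 // subr_le0 ler_norm.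
Qed.

Lemma futilE (k1 k2 : R) x : futil k1 k2 x = k1 * x - (k2 - k1) * `|negpart x|.
Proof. by rewrite /futil normr_negpart pospartE negpartE; field. Qed.

Lemma futilZ (k1 k2 : R) a x : 0 <= a -> futil k1 k2 (a * x) = a * futil k1 k2 x.
Proof.
by move=> a_ge0; rewrite !futilE !normr_negpart normrM (ger0_norm a_ge0); field.
Qed.

Lemma futil_le (k1 k2 : R) x : k1 <= k2 -> futil k1 k2 x <= k1 * x.
Proof. by move=> k12; rewrite futilE gerBl // mulr_ge0 ?subr_ge0. Qed.

Lemma divr_le_inv_futil (k1 k2 : R) (finv : R -> R) y :
  0 < k1 -> k1 <= k2 -> cancel finv (futil k1 k2) -> y / k1 <= finv y.
Proof.
move=> k1_gt0 k12 finvK; rewrite ler_pdivrMr // mulrC.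
by rewrite -{1}(finvK y); exact: futil_le.
Qed.

End futil.

Section expectation_futil.
Context d (T : measurableType d) (R : realType) (P : probability T R).
Variables k1 k2 : R.

Lemma Lfun_normr_negpart (X : T -> R) :
  X \in Lfun P 1 -> (fun w => `|negpart (X w)|) \in Lfun P 1.
Proof.
move=> LX; have -> : (fun w => `|negpart (X w)|) = 2^-1 \o* (Num.norm \o X \- X).
  by apply: funext => w /=; rewrite normr_negpart mulrC.
by apply/Lfun_scale/rpredB => //; exact: Lfun_norm.
Qed.

Let futil_comp (X : T -> R) : futil k1 k2 \o X =
  k1 \o* X \- (k2 - k1) \o* (fun w => `|negpart (X w)|).
Proof. by apply: funext => w /=; rewrite futilE; ring. Qed.

Lemma Lfun_futil (X : T -> R) :
  X \in Lfun P 1 -> futil k1 k2 \o X \in Lfun P 1.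
Proof.
move=> LX; rewrite futil_comp; apply: rpredB; apply: Lfun_scale => //.
exact: Lfun_normr_negpart.
Qed.

Lemma expectation_futil (X : T -> R) : X \in Lfun P 1 ->
  ('E_P[futil k1 k2 \o X] =
   k1%:E * 'E_P[X] - (k2 - k1)%:E * 'E_P[fun w => `|negpart (X w)|%R])%E.
Proof.
move=> LX; have LnX := Lfun_normr_negpart LX.
rewrite futil_comp expectationB; try exact: Lfun_scale.
by rewrite !expectationZl.
Qed.

End expectation_futil.

Theorem mainTheorem6 (R : realType) (d : measure_display) (T : measurableType d)
  (P : probability T R) (k1 k2 : R) (finv : R -> R) (dt c : R) (G : T -> R) :
  0 < k1 -> k1 < k2 ->
  cancel (futil k1 k2) finv -> cancel finv (futil k1 k2) ->
  0 < dt ->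
  P.-integrable setT (EFin \o G) ->
  let V := (finv (fine ('E_P[fun w => futil k1 k2 (dt * c + dt * G w)])) - dt * c) / dt in
  let Lambda := (k2 - k1) / k1 in
  ('E_P[G] - Lambda%:E * 'E_P[fun w => `|negpart (c + G w)|%R] <= V%:E)%E.
Proof.
move=> k1_gt0 k12 _ finvK dt_gt0 iG; cbv zeta.
have LG : G \in Lfun P 1 by exact/Lfun1_integrable.
have Lc : cst c \in Lfun P 1 by exact: Lfun_cst.
pose X := cst c \+ G.
have LX : X \in Lfun P 1 by rewrite rpredD.
have EX : ('E_P[X] = c%:E + 'E_P[G])%E by rewrite expectationD ?expectation_cst.
have EfX : ('E_P[fun w => futil k1 k2 (dt * c + dt * G w)] =
    dt%:E * 'E_P[futil k1 k2 \o X])%E.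
  rewrite -expectationZl; last exact: Lfun_futil.
  by congr 'E_P[_]%E; apply: funext => w /=; rewrite -mulrDr futilZ ?ltW // mulrC.
have [m Em] : exists m, ('E_P[G] = m%:E)%E.
  by exists (fine 'E_P[G]%E); rewrite fineK // expectation_fin_num.
have [n En] : exists n, ('E_P[fun w => `|negpart (X w)|%R] = n%:E)%E.
  exists (fine 'E_P[fun w => `|negpart (X w)|%R]%E).
  by rewrite fineK // expectation_fin_num // Lfun_normr_negpart.
rewrite EfX expectation_futil // EX Em En /= lee_fin ler_pdivlMr // lerBrDr.
set y := dt * (k1 * (c + m) - (k2 - k1) * n).
have -> : (m - (k2 - k1) / k1 * n) * dt + dt * c = y / k1.
  by rewrite /y; field; exact: lt0r_neq0.
exact: divr_le_inv_futil k1_gt0 (ltW k12) finvK.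
Qed.
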